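(* Let $f:\mathbb{R}^N\to[0,\infty]$ be a symmetric function and define $F:\mathbb{H}_N\to[0,\infty]$ by $F(X)=f(\lambda(X))$. Let $\gamma>0$. Then $$\mathcal{Q}_\gamma(F)=\mathcal{Q}_\gamma(f)\circ\lambda .$$ Moreover, for every $\rho>\gamma$ and every $X\in\mathbb{H}_N$, $$\operatorname{prox}_{\mathcal{Q}_\gamma(F)/\rho}(X)=U\,\operatorname{diag}\!\big(\operatorname{prox}_{\mathcal{Q}_\gamma(f)/\rho}(\lambda(X))\big)\,U^*,$$ where $X=U\operatorname{diag}(\lambda(X))U^*$ is any spectral decomposition of $X$ with $U$ unitary.
   Context: $\mathbb{H}_N$ denotes the real vector space of $N\times N$ complex Hermitian matrices with the Frobenius inner product $\langle X,Y\rangle_F$ and norm $\|\cdot\|_F$; $\mathbb{R}^N$ carries the Euclidean norm. For $X\in\mathbb{H}_N$, $\lambda(X)\in\mathbb{R}^N$ is the vector of eigenvalues of $X$ ordered non-increasingly. A function $f:\mathbb{R}^N\to[0,\infty]$ is symmetric if $f(\Pi x)=f(x)$ for every permutation matrix $\Pi$ and every $x$. For a function $g$ on a real Hilbert space $\mathcal{H}$ and $\gamma>0$, the quadratic envelope is $$\mathcal{Q}_\gamma(g)(x)=\sup_{\alpha\in\mathbb{R},\,y\in\mathcal{H}}\Big\{\alpha-\tfrac{\gamma}{2}\|x-y\|^2:\ \alpha-\tfrac{\gamma}{2}\|\cdot-y\|^2\le g\Big\}.$$ For a function $h$ on $\mathcal{H}$ and $\rho>0$, $\operatorname{prox}_{h/\rho}(w)=\operatorname{argmin}_{v\in\mathcal{H}}\big(h(v)/\rho+\tfrac12\|v-w\|^2\big)$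 (for $\rho>\gamma$ and $h=\mathcal{Q}_\gamma(\cdot)$ this is single-valued). *)

From Stdlib Require Import Reals Classical ClassicalEpsilon.
From mathcomp Require Import ssreflect ssrfun ssrbool eqtype ssrnat seq fintype.
From mathcomp Require Import fingroup perm.
Set Implicit Arguments. Unset Strict Implicit.
Local Open Scope R_scope.

Inductive ERbar := Fin (r : R) | PInf | MInf.

Definition ERle (a b : ERbar) : Prop :=
  match a, b with
  | MInf, _ => True
  | _, PInf => True
  | Fin x, Fin y => x <= y
  | _, _ => False
  end.

Definition ERdiv_add (h : ERbar) (c t : R) : ERbar :=
  match h with Fin r => Fin (r / c + t) | PInf => PInf | MInf => MInf end.

Definition ERsup (E : R -> Prop) : ERbar :=
  match excluded_middle_informative (exists l, is_lub E l) with
  | left H => Fin (proj1_sig (constructive_indefinite_description _ H))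
  | right _ =>
      match excluded_middle_informative (exists x, E x) with
      | left _ => PInf
      | right _ => MInf
      end
  end.

(* ---------- quadratic envelope and prox on a (sub)space ----------
   dom : the ambient real Hilbert space as a predicate on a carrier type,
   d2 x y : squared norm ||x - y||^2. *)
Definition Qenv (T : Type) (dom : T -> Prop) (d2 : T -> T -> R)
  (gamma : R) (g : T -> ERbar) (x : T) : ERbar :=
  ERsup (fun t => exists (alpha : R) (y : T),
     dom y /\
     (forall z, dom z -> ERle (Fin (alpha - gamma / 2 * d2 z y)) (g z)) /\
     t = alpha - gamma / 2 * d2 x y).

Definition is_prox (T : Type) (dom : T -> Prop) (d2 : T -> T -> R)
  (h : T -> ERbar) (rho : R) (w v : T) : Prop :=
  dom v /\ forall u, dom u ->
    ERle (ERdiv_add (h v) rho (/ 2 * d2 v w)) (ERdiv_add (h u) rho (/ 2 * d2 u w)).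

Definition sumI (N : nat) (F : 'I_N -> R) : R :=
  foldr Rplus 0 (map F (enum 'I_N)).

Definition vecR (N : nat) := 'I_N -> R.
Definition vdist2 (N : nat) (x y : vecR N) : R :=
  sumI (fun i => (x i - y i) * (x i - y i)).

Record C := mkC { Cre : R; Cim : R }.
Definition C0 : C := mkC 0 0.
Definition C1 : C := mkC 1 0.
Definition RtoC (r : R) : C := mkC r 0.
Definition Cadd (a b : C) : C := mkC (Cre a + Cre b) (Cim a + Cim b).
Definition Csub (a b : C) : C := mkC (Cre a - Cre b) (Cim a - Cim b).
Definition Cmul (a b : C) : C :=
  mkC (Cre a * Cre b - Cim a * Cim b) (Cre a * Cim b + Cim a * Cre b).
Definition Cconj (a : C) : C := mkC (Cre a) (- Cim a).
Definition Cnorm2 (a : C) : R := Cre a * Cre a + Cim a * Cim a.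
Definition csumI (N : nat) (F : 'I_N -> C) : C :=
  foldr Cadd C0 (map F (enum 'I_N)).

Definition mat (N : nat) := 'I_N -> 'I_N -> C.
Definition mmul (N : nat) (A B : mat N) : mat N :=
  fun i j => csumI (fun k => Cmul (A i k) (B k j)).
Definition adj (N : nat) (A : mat N) : mat N := fun i j => Cconj (A j i).
Definition idm (N : nat) : mat N := fun i j => if i == j then C1 else C0.
Definition diagm (N : nat) (l : vecR N) : mat N :=
  fun i j => if i == j then RtoC (l i) else C0.
Definition hermitian (N : nat) (X : mat N) : Prop := forall i j, X j i = Cconj (X i j).
Definition unitary (N : nat) (U : mat N) : Prop :=
  mmul U (adj U) = @idm N /\ mmul (adj U) U = @idm N.
Definition fdist2 (N : nat) (X Y : mat N) : R :=
  sumI (fun i => sumI (fun j => Cnorm2 (Csub (X i j) (Y i j)))).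

Definition nonincreasing (N : nat) (l : vecR N) : Prop :=
  forall i j : 'I_N, (i <= j)%N -> l j <= l i.
Definition is_eigvals (N : nat) (X : mat N) (l : vecR N) : Prop :=
  nonincreasing l /\ exists U, unitary U /\ X = mmul (mmul U (diagm l)) (adj U).
Definition lambda (N : nat) (X : mat N) : vecR N :=
  match excluded_middle_informative (exists l, is_eigvals X l) with
  | left H => proj1_sig (constructive_indefinite_description _ H)
  | right _ => fun _ => 0
  end.

Definition Qvec (N : nat) := @Qenv (vecR N) (fun _ => True) (@vdist2 N).
Definition Qmat (N : nat) := @Qenv (mat N) (@hermitian N) (@fdist2 N).
Definition prox_vec (N : nat) := @is_prox (vecR N) (fun _ => True) (@vdist2 N).
Definition prox_mat (N : nat) := @is_prox (mat N) (@hermitian N) (@fdist2 N).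

(* The key estimate is the Hoffman-Wielandt inequality: for unitary U, W and
   nonincreasing a, b,
     ||a - b||^2 <= ||U diag(a) U^* - W diag(b) W^*||_F^2,
   with equality when U = W.  Expanding the right-hand side, the difference is
   2 (sum_i a_i b_i - sum_ij a_i b_j |(U^* W)_ij|^2), which is nonnegative since
   (|(U^* W)_ij|^2) is doubly stochastic and a, b are sorted (Abel summation).
   Hence a quadratic minorant alpha - gamma/2 ||. - Y||^2 of F gives the minorant
   alpha - gamma/2 ||. - lambda(Y)||^2 of f, and, sorting the centre with the symmetry
   of f, a minorant of f centred at y gives one of F centred at U diag(y) U^*: the
   two envelopes are suprema of mutually cofinal families.  For the prox, replacing
   a candidate V by U diag(lambda(V)) U^* never increases the objective, and for
   rho > gamma the objective is strictly convex (Q_gamma(F) + gamma/2 ||.||^2 is a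
   supremum of affine functions), so the prox point is unique. *)

From Stdlib Require Import Reals Lra FunctionalExtensionality Classical ClassicalEpsilon.
From mathcomp Require Import all_boot all_order all_algebra Rstruct.
From mathcomp Require Import fingroup perm complex sesquilinear spectral.
From mathcomp Require lra ring.

Set Implicit Arguments.
Unset Strict Implicit.
Unset Printing Implicit Defensive.

Section Rearrangement.
Import mathcomp.algebra_tactics.lra mathcomp.algebra_tactics.ring.
Import Order.TTheory GRing.Theory Num.Theory.
Local Open Scope ring_scope.

Variables (R : realDomainType) (N : nat).
Implicit Types (a b d : 'I_N -> R) (S : 'I_N -> 'I_N -> R).

Definition doubly_stochastic S :=
  [/\ forall i j, 0 <= S i j, forall j, \sum_i S i j = 1 & forall i, \sum_j S i j = 1].

Lemma sum_prefixS k (kN : (k < N)%N) (F : 'I_N -> R) :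
  \sum_(i < N | (i < k.+1)%N) F i = F (Ordinal kN) + \sum_(i < N | (i < k)%N) F i.
Proof.
rewrite (bigD1 (Ordinal kN)) //=; congr (_ + _); apply: eq_bigl => i.
by rewrite -val_eqE /= ltnS; case: ltngtP.
Qed.

Lemma sum_prefixN (F : 'I_N -> R) : \sum_(i < N | (i < N)%N) F i = \sum_i F i.
Proof. by apply: eq_bigl => i; rewrite ltn_ord. Qed.

Lemma opp_sum_norm_le a j : - \sum_i `|a i| <= a j.
Proof.
by rewrite lerNl (bigD1 j) //= -normrN ler_wpDr ?ler_norm ?sumr_ge0.
Qed.

Lemma abel_prefix_sum_le a d :
  {homo a : i j / (i <= j)%N >-> j <= i} ->
  (forall k, \sum_(i < N | (i < k)%N) d i <= 0) ->
  forall k, (k <= N)%N -> forall m, (forall i : 'I_N, (i < k)%N -> m <= a i) ->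
  \sum_(i < N | (i < k)%N) a i * d i <= m * \sum_(i < N | (i < k)%N) d i.
Proof.
move=> a_noninc d_prefix; elim=> [|k IHk] kN m m_lb.
  by rewrite !big_pred0 ?mulr0.
rewrite !(sum_prefixS kN).
have IH := IHk (ltnW kN) (a (Ordinal kN)) (fun i ik => a_noninc i (Ordinal kN) (ltnW ik)).
apply: (le_trans (lerD (lexx _) IH)).
by rewrite -mulrDr -(sum_prefixS kN) ler_wnM2r ?d_prefix ?m_lb.
Qed.

Lemma doubly_stochastic_prefix_le0 b S k :
  {homo b : i j / (i <= j)%N >-> j <= i} -> doubly_stochastic S ->
  \sum_(i < N | (i < k)%N) (\sum_j b j * S i j - b i) <= 0.
Proof.
move=> b_noninc [S_ge0 S_col S_row].
pose c j := \sum_(i < N | (i < k)%N) S i j.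
have c_ge0 j : 0 <= c j by apply: sumr_ge0.
have c_le1 j : c j <= 1.
  rewrite -(S_col j) [leRHS](bigID (fun i : 'I_N => (i < k)%N)) /= lerDl.
  exact: sumr_ge0.
have [m m_lo m_hi] : exists2 m, (forall j : 'I_N, (j < k)%N -> m <= b j)
                              & (forall j : 'I_N, (k <= j)%N -> b j <= m).
  case: (ltnP k N) => [kN|Nk].
    by exists (b (Ordinal kN)) => j jk; apply: b_noninc => //; apply: ltnW.
  exists (- \sum_i `|b i|) => [j _|j kj]; first exact: opp_sum_norm_le.
  by have := leq_trans Nk kj; rewrite leqNgt ltn_ord.
have -> : \sum_(i < N | (i < k)%N) (\sum_j b j * S i j - b i) =
          \sum_j b j * (c j - ((j < k)%N)%:R).
  rewrite sumrB exchange_big /= [X in _ - X]big_mkcond /= -sumrB.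
  apply: eq_bigr => j _; rewrite mulrBr mulr_sumr.
  by case: (j < k)%N; rewrite ?mulr1 ?mulr0.
apply: (@le_trans _ _ (\sum_j m * (c j - ((j < k)%N)%:R))).
  apply: ler_sum => j _; case: (ltnP j k) => jk /=.
    by have := m_lo j jk; have := c_le1 j; rewrite mulr1n; nra.
  by have := m_hi j jk; have := c_ge0 j; rewrite mulr0n; nra.
rewrite -mulr_sumr sumrB.
suff -> : \sum_j c j = \sum_(j < N) ((j < k)%N)%:R :> R by rewrite subrr mulr0.
rewrite /c exchange_big /= big_mkcond /=.
by apply: eq_bigr => i _; case: (i < k)%N; rewrite ?S_row.
Qed.

Lemma doubly_stochastic_rearrangement a b S :
  {homo a : i j / (i <= j)%N >-> j <= i} ->
  {homo b : i j / (i <= j)%N >-> j <= i} -> doubly_stochastic S ->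
  \sum_i \sum_j a i * b j * S i j <= \sum_i a i * b i.
Proof.
move=> a_noninc b_noninc S_ds; rewrite -subr_le0.
pose d i := \sum_j b j * S i j - b i.
have -> : \sum_i \sum_j a i * b j * S i j - \sum_i a i * b i = \sum_i a i * d i.
  rewrite -sumrB; apply: eq_bigr => i _; rewrite /d mulrBr mulr_sumr.
  by congr (_ - _); apply: eq_bigr => j _; rewrite mulrA.
have d_sum0 : \sum_i d i = 0.
  case: S_ds => _ S_col _; rewrite /d sumrB exchange_big /=.
  by rewrite (eq_bigr b) ?subrr // => j _; rewrite -mulr_sumr S_col mulr1.
have := abel_prefix_sum_le a_noninc
  (fun k => doubly_stochastic_prefix_le0 k b_noninc S_ds) (leqnn N)
  (fun i _ => opp_sum_norm_le a i).
by rewrite !sum_prefixN d_sum0 mulr0.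
Qed.

Definition sqdist a b := \sum_i (a i - b i) * (a i - b i).

Lemma sqdistE a b :
  sqdist a b = \sum_i a i * a i + \sum_i b i * b i - 2 * \sum_i a i * b i.
Proof.
by rewrite /sqdist -big_split /= mulr_sumr -sumrB; apply: eq_bigr => i _; ring.
Qed.

Lemma sqdist_ge0 a b : 0 <= sqdist a b.
Proof. by apply: sumr_ge0 => i _; rewrite -expr2 sqr_ge0. Qed.

Lemma sqdist_eq0 a b : sqdist a b = 0 -> a = b.
Proof.
move/eqP; rewrite psumr_eq0 => [/allP ab|i _]; last by rewrite -expr2 sqr_ge0.
apply: functional_extensionality => i.
by move: (ab i (mem_index_enum i)); rewrite mulf_eq0 orbb subr_eq0 => /eqP.
Qed.

Lemma sum_perm_indicator (s : {perm 'I_N}) i (F : 'I_N -> R) :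
  \sum_j (s j == i)%:R * F j = F (s^-1 i)%g.
Proof.
rewrite (bigD1 (s^-1 i)%g) //= permKV eqxx mul1r big1 ?addr0 // => j ji.
by rewrite (canF_eq (permK s)) (negPf ji) mul0r.
Qed.

Lemma doubly_stochastic_perm (s : {perm 'I_N}) :
  doubly_stochastic (fun i j => (s j == i)%:R).
Proof.
split=> [i j|j|i]; first exact: ler0n.
  rewrite (bigD1 (s j)) //= eqxx big1 ?addr0 // => i.
  by rewrite eq_sym => /negPf ->.
by have := sum_perm_indicator s i (fun _ => 1); under eq_bigr do rewrite mulr1.
Qed.

Lemma sqdist_sorted_le a b (s : {perm 'I_N}) :
  {homo a : i j / (i <= j)%N >-> j <= i} ->
  {homo (fun i => b (s i)) : i j / (i <= j)%N >-> j <= i} ->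
  sqdist a (fun i => b (s i)) <= sqdist a b.
Proof.
move=> a_noninc bs_noninc.
have bs_sq : \sum_i b (s i) * b (s i) = \sum_i b i * b i.
  by rewrite [RHS](reindex_inj (@perm_inj _ s)).
rewrite !sqdistE bs_sq lerD2l lerN2 ler_pM2l ?ltr0n //.
have := doubly_stochastic_rearrangement a_noninc bs_noninc (doubly_stochastic_perm s).
congr (_ <= _); apply: eq_bigr => i _.
transitivity (a i * \sum_j (s j == i)%:R * b (s j)).
  by rewrite mulr_sumr; apply: eq_bigr => j _; ring.
by rewrite sum_perm_indicator permKV.
Qed.

Lemma exists_sorting_perm a :
  exists s : {perm 'I_N}, {homo (fun i => a (s i)) : i j / (i <= j)%N >-> j <= i}.
Proof.
pose ge := fun x y : R => y <= x.
have ge_total : total ge by move=> x y; exact: le_total.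
have ge_trans : transitive ge by move=> x y z xy yz; exact: le_trans yz xy.
set t := [tuple a i | i < N].
have /tuple_permP[s sE] : perm_eq (sort ge t) t by rewrite perm_sort.
exists s => i j ij.
have sortE (k : 'I_N) : nth 0 (sort ge t) k = a (s k).
  by rewrite sE /= (nth_map k) ?size_enum_ord // nth_ord_enum tnth_mktuple.
rewrite -!sortE; apply: (sorted_leq_nth ge_trans (@lexx _ R));
  by rewrite ?sort_sorted ?inE ?size_sort ?size_tuple ?ltn_ord.
Qed.

End Rearrangement.

Section UnitaryConjugation.
Import mathcomp.algebra_tactics.ring.
Import Order.TTheory GRing.Theory Num.Theory.
Local Open Scope complex_scope.
Local Open Scope ring_scope.
Local Open Scope sesquilinear_scope.

Variable R : rcfType.

Definition sqnormc (z : R[i]) : R :=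
  complex.Re z * complex.Re z + complex.Im z * complex.Im z.

Lemma conjC_real (x : R) : x%:C^* = x%:C.
Proof. by apply/eqP; rewrite eq_complex /= oppr0 !eqxx. Qed.

Lemma mulC_conjC (z : R[i]) : z * z^* = (sqnormc z)%:C.
Proof.
by case: z => a b; apply/eqP; rewrite eq_complex /sqnormc /=; apply/andP; split;
  apply/eqP; ring.
Qed.

Lemma sqnormc_ge0 z : 0 <= sqnormc z.
Proof. by rewrite /sqnormc addr_ge0 // -expr2 sqr_ge0. Qed.

Lemma sqnormc_eq0 z : sqnormc z = 0 -> z = 0.
Proof.
case: z => x y; rewrite /sqnormc /= => /eqP.
rewrite paddr_eq0 -?expr2 ?sqr_ge0 // !sqrf_eq0.
by case/andP => /eqP -> /eqP ->.
Qed.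

Variable N : nat.
Implicit Types (a b : 'I_N -> R) (U W P : 'M[R[i]]_N).

(* Locked: letting unification unfold [diag_mx] inside matrix products is very slow. *)
Fact diag_real_key : unit. Proof. by []. Qed.
Definition diag_real a : 'M[R[i]]_N :=
  locked_with diag_real_key (diag_mx (\row_i (a i)%:C)).

Lemma diag_realE a : diag_real a = diag_mx (\row_i (a i)%:C).
Proof. by rewrite /diag_real unlock. Qed.

Definition frob2 (A : 'M[R[i]]_N) : R := \sum_i \sum_j sqnormc (A i j).

Lemma trmxC_mul U W : (U *m W)^t* = W^t* *m U^t*.
Proof. by rewrite trmx_mul map_mxM. Qed.

Lemma trmxCB (A B : 'M[R[i]]_N) : (A - B)^t* = A^t* - B^t*.
Proof. by apply/matrixP => i j; rewrite !mxE rmorphB. Qed.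

Lemma trmxC_diag_real a : (diag_real a)^t* = diag_real a.
Proof.
apply/matrixP => i j; rewrite diag_realE !mxE eq_sym.
by case: eqP => [->|_]; rewrite ?mulr1n ?conjC_real ?mulr0n ?conjC0.
Qed.

Lemma trmxC_conj_diag_real U a :
  (U *m diag_real a *m U^t*)^t* = U *m diag_real a *m U^t*.
Proof. by rewrite !trmxC_mul trmxCK trmxC_diag_real mulmxA. Qed.

Lemma trmxC_unitarymx U : U \is unitarymx -> U^t* \is unitarymx.
Proof. by rewrite -(trmxC_unitary U). Qed.

Lemma unitarymx_tCK U : U \is unitarymx -> U^t* *m U = 1%:M.
Proof.
by move=> U_unitary; rewrite -{2}(trmxCK U); apply/unitarymxP; exact: trmxC_unitarymx.
Qed.

Lemma frob2E A : (frob2 A)%:C = \tr (A *m A^t*).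
Proof.
rewrite /frob2 rmorph_sum; apply: eq_bigr => i _.
by rewrite rmorph_sum !mxE; apply: eq_bigr => j _; rewrite !mxE mulC_conjC.
Qed.

Lemma frob2B_hermitian (X Y : 'M[R[i]]_N) : X^t* = X -> Y^t* = Y ->
  (frob2 (X - Y))%:C = \tr (X *m X) + \tr (Y *m Y) - 2%:R * \tr (X *m Y).
Proof.
move=> X_herm Y_herm; rewrite frob2E trmxCB X_herm Y_herm mulmxBl !mulmxBr.
by rewrite !raddfB /= (mxtrace_mulC Y X); ring.
Qed.

Lemma doubly_stochastic_unitarymx P : P \is unitarymx ->
  doubly_stochastic (fun i j => sqnormc (P i j)).
Proof.
move=> P_unitary; split=> [i j|j|i]; first exact: sqnormc_ge0.
  apply: complexI; rewrite rmorph_sum rmorph1.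
  have /matrixP/(_ j j) := unitarymx_tCK P_unitary; rewrite !mxE eqxx mulr1n => <-.
  by apply: eq_bigr => i _; rewrite !mxE mulrC mulC_conjC.
apply: complexI; rewrite rmorph_sum rmorph1.
have /unitarymxP/matrixP/(_ i i) := P_unitary; rewrite !mxE eqxx mulr1n => <-.
by apply: eq_bigr => j _; rewrite !mxE mulC_conjC.
Qed.

Lemma mxtrace_diag_realMl a (Q : 'M[R[i]]_N) :
  \tr (diag_real a *m Q) = \sum_i (a i)%:C * Q i i.
Proof. by rewrite diag_realE mul_diag_mx; apply: eq_bigr => i _; rewrite !mxE. Qed.

Lemma conj_diag_realE P b i :
  (P *m diag_real b *m P^t*) i i = \sum_j (b j * sqnormc (P i j))%:C.
Proof.
rewrite mxE; apply: eq_bigr => j _.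
by rewrite diag_realE mul_mx_diag !mxE mulrAC mulC_conjC rmorphM mulrC.
Qed.

Lemma mxtrace_conj_diag_realM U W a b :
  \tr ((U *m diag_real a *m U^t*) *m (W *m diag_real b *m W^t*)) =
  (\sum_i \sum_j a i * b j * sqnormc ((U^t* *m W) i j))%:C.
Proof.
rewrite -!mulmxA mxtrace_mulC.
have -> : diag_real a *m (U^t* *m (W *m (diag_real b *m W^t*))) *m U =
    diag_real a *m ((U^t* *m W) *m diag_real b *m (U^t* *m W)^t*).
  by rewrite trmxC_mul trmxCK !mulmxA.
rewrite mxtrace_diag_realMl rmorph_sum; apply: eq_bigr => i _.
rewrite conj_diag_realE rmorph_sum mulr_sumr; apply: eq_bigr => j _.
by rewrite -!rmorphM mulrA.
Qed.

Lemma sum_sqnormc_idmx (c : 'I_N -> 'I_N -> R) :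
  \sum_i \sum_j c i j * sqnormc ((1%:M : 'M[R[i]]_N) i j) = \sum_i c i i.
Proof.
apply: eq_bigr => i _; rewrite (bigD1 i) //= big1 ?addr0 => [|j ji].
  by rewrite /sqnormc mxE eqxx /= mulr1 mul0r addr0 mulr1.
by rewrite /sqnormc mxE eq_sym (negPf ji) /= mul0r addr0 mulr0.
Qed.

Lemma frob2_conj_diag U W a b : U \is unitarymx -> W \is unitarymx ->
  frob2 (U *m diag_real a *m U^t* - W *m diag_real b *m W^t*) =
  \sum_i a i * a i + \sum_i b i * b i
  - 2 * \sum_i \sum_j a i * b j * sqnormc ((U^t* *m W) i j).
Proof.
move=> U_unitary W_unitary; apply: complexI.
rewrite frob2B_hermitian ?trmxC_conj_diag_real // !mxtrace_conj_diag_realM.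
rewrite !unitarymx_tCK // !sum_sqnormc_idmx.
by rewrite rmorphB rmorphD rmorphM rmorph_nat.
Qed.

Lemma hoffman_wielandt U W a b : U \is unitarymx -> W \is unitarymx ->
  {homo a : i j / (i <= j)%N >-> j <= i} -> {homo b : i j / (i <= j)%N >-> j <= i} ->
  sqdist a b <= frob2 (U *m diag_real a *m U^t* - W *m diag_real b *m W^t*).
Proof.
move=> U_unitary W_unitary a_noninc b_noninc.
have UW_unitary := mul_unitarymx (trmxC_unitarymx U_unitary) W_unitary.
rewrite frob2_conj_diag // sqdistE lerD2l lerN2 ler_pM2l ?ltr0n //.
exact: doubly_stochastic_rearrangement a_noninc b_noninc
  (doubly_stochastic_unitarymx UW_unitary).
Qed.

Lemma frob2_ge0 A : 0 <= frob2 A.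
Proof. by apply: sumr_ge0 => i _; apply: sumr_ge0 => j _; apply: sqnormc_ge0. Qed.

Lemma frob2_0 : frob2 0 = 0.
Proof.
by rewrite /frob2 big1 // => i _; rewrite big1 // => j _; rewrite mxE /sqnormc /= mulr0 addr0.
Qed.

Lemma frob2_eq0 A : frob2 A = 0 -> A = 0.
Proof.
move/eqP; rewrite psumr_eq0 => [/allP A0|i _]; last first.
  by apply: sumr_ge0 => j _; apply: sqnormc_ge0.
apply/matrixP => i j; rewrite mxE; apply: sqnormc_eq0.
move: (A0 i (mem_index_enum i)); rewrite psumr_eq0 => [/allP/(_ j)|k _].
  by rewrite mem_index_enum => /(_ isT)/eqP.
exact: sqnormc_ge0.
Qed.

Lemma frob2_conj_diag_same U a b : U \is unitarymx ->
  frob2 (U *m diag_real a *m U^t* - U *m diag_real b *m U^t*) = sqdist a b.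
Proof.
by move=> U_unitary; rewrite frob2_conj_diag // unitarymx_tCK // sum_sqnormc_idmx sqdistE.
Qed.

Lemma perm_mx_unitary (s : {perm 'I_N}) : perm_mx s \is @unitarymx R[i] N N.
Proof.
by apply/unitarymxP; rewrite tr_perm_mx map_perm_mx -perm_mxM mulgV perm_mx1.
Qed.

Lemma conj_diag_real_perm U a (s : {perm 'I_N}) :
  U *m diag_real a *m U^t* =
  (U *m perm_mx s^-1) *m diag_real (fun i => a (s i)) *m (U *m perm_mx s^-1)^t*.
Proof.
suff <- : perm_mx s^-1 *m diag_real (fun i => a (s i)) *m (perm_mx s^-1)^t* =
          diag_real a by rewrite trmxC_mul !mulmxA.
rewrite tr_perm_mx map_perm_mx -row_permE -col_permE !diag_realE.
by apply/matrixP => i j; rewrite !mxE (inj_eq perm_inj) permKV.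
Qed.

Lemma spectral_real_diag (X : 'M[R[i]]_N) : X^t* = X ->
  exists U a, U \is unitarymx /\ X = U *m diag_real a *m U^t*.
Proof.
move=> X_herm.
have X_hermsym : X \is hermsymmx by rewrite qualifE /= expr0 scale1r X_herm.
have /orthomx_spectralP XE := hermitian_normalmx X_hermsym.
have /mxOverP D_real := hermitian_spectral_diag_real X_hermsym.
have D_diag : diag_mx (spectral_diag X) =
    diag_real (fun i => complex.Re (spectral_diag X 0 i)).
  by apply/matrixP => i j; rewrite diag_realE !mxE RRe_real ?D_real.
exists ((spectralmx X)^t*), (fun i => complex.Re (spectral_diag X 0 i)); split.
  exact/trmxC_unitarymx/spectral_unitarymx.
by rewrite trmxCK -D_diag -(invmx_unitary (spectral_unitarymx X)).
Qed.
End UnitaryConjugation.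

Section MatrixEncoding.
Import GRing.Theory.
Local Open Scope ring_scope.
Local Open Scope sesquilinear_scope.

Variable N : nat.
Implicit Types (a b : vecR N) (A B U X Y : mat N).

Definition cplx (z : C) : R[i] := Complex (Cre z) (Cim z).
Definition mat_mx A : 'M[R[i]]_N := \matrix_(i, j) cplx (A i j).
Definition mx_mat (M : 'M[R[i]]_N) : mat N :=
  fun i j => mkC (complex.Re (M i j)) (complex.Im (M i j)).

Lemma mx_matK : cancel mx_mat mat_mx.
Proof. by move=> M; apply/matrixP => i j; rewrite mxE /cplx /=; case: (M i j). Qed.

Lemma mat_mx_inj : injective mat_mx.
Proof.
move=> A B AB; apply: functional_extensionality => i.
apply: functional_extensionality => j.
have /matrixP/(_ i j) := AB; rewrite !mxE.
by case: (A i j) => ? ?; case: (B i j) => ? ? [-> ->].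
Qed.

Lemma foldr_Rplus_sum (T : Type) (r : seq T) (F : T -> R) :
  foldr Rplus 0 (map F r) = \sum_(i <- r) F i.
Proof. by elim: r => [|x r IH]; rewrite ?big_nil ?big_cons //= IH. Qed.

Lemma foldr_Cadd_sum (T : Type) (r : seq T) (F : T -> C) :
  cplx (foldr Cadd C0 (map F r)) = \sum_(i <- r) cplx (F i).
Proof. by elim: r => [|x r IH]; rewrite ?big_nil ?big_cons //= -IH. Qed.

Lemma sumIE (F : 'I_N -> R) : sumI F = \sum_i F i.
Proof. by rewrite /sumI foldr_Rplus_sum enumT. Qed.

Lemma csumIE (F : 'I_N -> C) : cplx (csumI F) = \sum_i cplx (F i).
Proof. by rewrite /csumI foldr_Cadd_sum enumT. Qed.

Lemma mat_mx_mmul A B : mat_mx (mmul A B) = mat_mx A *m mat_mx B.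
Proof.
by apply/matrixP => i j; rewrite !mxE csumIE; apply: eq_bigr => k _; rewrite !mxE.
Qed.

Lemma mat_mx_adj A : mat_mx (adj A) = (mat_mx A)^t*.
Proof. by apply/matrixP => i j; rewrite !mxE. Qed.

Lemma mat_mx_diagm a : mat_mx (diagm a) = diag_real a.
Proof. by apply/matrixP => i j; rewrite diag_realE !mxE /diagm; case: (i == j). Qed.

Lemma mat_mx_idm : mat_mx (@idm N) = 1%:M.
Proof. by apply/matrixP => i j; rewrite !mxE /idm; case: (i == j). Qed.

Lemma unitaryE U : unitary U <-> mat_mx U \is unitarymx.
Proof.
split=> [[UU' _]|U_unitary].
  by apply/unitarymxP; rewrite -mat_mx_adj -mat_mx_mmul UU' mat_mx_idm.
split; apply: mat_mx_inj; rewrite mat_mx_mmul mat_mx_adj mat_mx_idm.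
  exact/unitarymxP.
exact: unitarymx_tCK.
Qed.

Lemma hermitianE X : hermitian X <-> (mat_mx X)^t* = mat_mx X.
Proof.
split=> [X_herm|/matrixP X_herm i j].
  apply/matrixP => i j; rewrite !mxE X_herm /cplx /=.
  by apply/eqP; rewrite eq_complex /= opprK !eqxx.
have := X_herm j i; rewrite !mxE /cplx.
by case: (X i j) => ? ?; case: (X j i) => ? ? /= [<- <-].
Qed.

Lemma fdist2E X Y : fdist2 X Y = frob2 (mat_mx X - mat_mx Y).
Proof.
rewrite /fdist2 /frob2 sumIE; apply: eq_bigr => i _.
by rewrite sumIE; apply: eq_bigr => j _; rewrite !mxE.
Qed.

Lemma vdist2E a b : vdist2 a b = sqdist a b.
Proof. by rewrite /vdist2 sumIE. Qed.

Lemma nonincreasingE a :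
  nonincreasing a <-> {homo a : i j / (i <= j)%N >-> j <= i}.
Proof. by split=> a_noninc i j ij; apply/RleP; apply: a_noninc. Qed.

Definition conj_diagm U a : mat N := mmul (mmul U (diagm a)) (adj U).

Lemma mat_mx_conj_diagm U a :
  mat_mx (conj_diagm U a) = mat_mx U *m diag_real a *m (mat_mx U)^t*.
Proof. by rewrite /conj_diagm !mat_mx_mmul mat_mx_adj mat_mx_diagm. Qed.

End MatrixEncoding.

Section Eigenvalues.
Local Open Scope R_scope.

Variable N : nat.
Implicit Types (a b l z : vecR N) (U W X Y Z : mat N).

Lemma unitary_idm : unitary (@idm N).
Proof.
by apply/unitaryE; rewrite mat_mx_idm; apply/unitarymxP; rewrite trmx1 map_mx1 mulmx1.
Qed.

Lemma conj_diagm_hermitian U a : hermitian (conj_diagm U a).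
Proof. by apply/hermitianE; rewrite mat_mx_conj_diagm trmxC_conj_diag_real. Qed.

Lemma vdist2_ge0 a b : 0 <= vdist2 a b.
Proof. by apply/RleP; rewrite vdist2E sqdist_ge0. Qed.

Lemma vdist2_eq0 a b : vdist2 a b = 0 -> a = b.
Proof. by rewrite vdist2E; apply: sqdist_eq0. Qed.

Lemma fdist2_ge0 X Y : 0 <= fdist2 X Y.
Proof. by apply/RleP; rewrite fdist2E frob2_ge0. Qed.

Lemma fdist2_eq0 X Y : fdist2 X Y = 0 -> X = Y.
Proof.
rewrite fdist2E => /frob2_eq0/eqP; rewrite GRing.subr_eq0 => /eqP.
exact: mat_mx_inj.
Qed.

Lemma fdist2_self X : fdist2 X X = 0.
Proof. by rewrite fdist2E GRing.subrr frob2_0. Qed.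

Lemma vdist2_perm (s : {perm 'I_N}) a b :
  vdist2 (fun i => a (s i)) (fun i => b (s i)) = vdist2 a b.
Proof. by rewrite !vdist2E /sqdist [RHS](reindex_inj (@perm_inj _ s)). Qed.

Lemma vdist2_permr (s : {perm 'I_N}) a b :
  vdist2 a (fun i => b (s i)) = vdist2 (fun i => a ((s^-1)%g i)) b.
Proof.
rewrite -(vdist2_perm s (fun i => a ((s^-1)%g i))).
by congr vdist2; apply: functional_extensionality => i; rewrite permK.
Qed.

Lemma vdist2_sorted_le a b (s : {perm 'I_N}) :
  nonincreasing a -> nonincreasing (fun i => b (s i)) ->
  vdist2 a (fun i => b (s i)) <= vdist2 a b.
Proof.
move=> /nonincreasingE a_noninc /nonincreasingE bs_noninc.
by apply/RleP; rewrite !vdist2E; apply: sqdist_sorted_le.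
Qed.

Lemma vdist2_le_fdist2 U W a b : unitary U -> unitary W ->
  nonincreasing a -> nonincreasing b ->
  vdist2 a b <= fdist2 (conj_diagm U a) (conj_diagm W b).
Proof.
move=> /unitaryE U_unitary /unitaryE W_unitary /nonincreasingE a_noninc
  /nonincreasingE b_noninc.
apply/RleP; rewrite vdist2E fdist2E !mat_mx_conj_diagm.
exact: (hoffman_wielandt U_unitary W_unitary a_noninc b_noninc).
Qed.

Lemma fdist2_conj_diagm U a b :
  unitary U -> fdist2 (conj_diagm U a) (conj_diagm U b) = vdist2 a b.
Proof.
move=> /unitaryE U_unitary.
by rewrite vdist2E fdist2E !mat_mx_conj_diagm frob2_conj_diag_same.
Qed.

Lemma conj_diagm_sort U a : unitary U ->
  exists s : {perm 'I_N}, nonincreasing (fun i => a (s i)) /\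
    exists2 W, unitary W & conj_diagm U a = conj_diagm W (fun i => a (s i)).
Proof.
move=> /unitaryE U_unitary; have [s /nonincreasingE as_noninc] := exists_sorting_perm a.
exists s; split => //; exists (mx_mat (mat_mx U *m perm_mx s^-1)).
  apply/unitaryE; rewrite mx_matK; apply: mul_unitarymx U_unitary _.
  exact: perm_mx_unitary.
by apply: mat_mx_inj; rewrite !mat_mx_conj_diagm mx_matK -conj_diag_real_perm.
Qed.

Lemma hermitian_eigvals X : hermitian X -> exists l, is_eigvals X l.
Proof.
move=> /hermitianE /spectral_real_diag [U [a [U_unitary XE]]].
have U_unitary' : unitary (mx_mat U) by apply/unitaryE; rewrite mx_matK.
have [s [as_noninc [W W_unitary E]]] := conj_diagm_sort a U_unitary'.
exists (fun i => a (s i)); split => //; exists W; split => //.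
by rewrite -/(conj_diagm W _) -E; apply: mat_mx_inj; rewrite mat_mx_conj_diagm mx_matK.
Qed.

Lemma lambda_eigvals X : hermitian X -> is_eigvals X (lambda X).
Proof.
move=> /hermitian_eigvals X_eig; rewrite /lambda.
case: (excluded_middle_informative (exists l, is_eigvals X l)) => [l_ex|//].
by case: constructive_indefinite_description.
Qed.

Lemma eigvals_unique X a b : is_eigvals X a -> is_eigvals X b -> a = b.
Proof.
move=> [a_noninc [U [U_unitary XU]]] [b_noninc [W [W_unitary XW]]].
apply: vdist2_eq0; apply: Rle_antisym; last exact: vdist2_ge0.
have := vdist2_le_fdist2 U_unitary W_unitary a_noninc b_noninc.
by rewrite /conj_diagm -XU -XW fdist2_self.
Qed.

Lemma lambda_conj_diagm W z : unitary W ->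
  exists s : {perm 'I_N}, lambda (conj_diagm W z) = (fun i => z (s i)).
Proof.
move=> W_unitary; have [s [zs_noninc [W' W'_unitary E]]] := conj_diagm_sort z W_unitary.
exists s; apply: (@eigvals_unique (conj_diagm W z)).
  exact/lambda_eigvals/conj_diagm_hermitian.
by split => //; exists W'.
Qed.

Lemma vdist2_lambda_le X Y : hermitian X -> hermitian Y ->
  vdist2 (lambda X) (lambda Y) <= fdist2 X Y.
Proof.
move=> /lambda_eigvals [lX_noninc [U [U_unitary XU]]].
move=> /lambda_eigvals [lY_noninc [W [W_unitary YW]]].
by have := vdist2_le_fdist2 U_unitary W_unitary lX_noninc lY_noninc;
  rewrite /conj_diagm -XU -YW.
Qed.

End Eigenvalues.

Section ExtendedSup.
Local Open Scope R_scope.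

Definition cofinal (E1 E2 : R -> Prop) :=
  forall t, E1 t -> exists2 t', E2 t' & t <= t'.

Lemma is_lub_cofinal E1 E2 l :
  cofinal E1 E2 -> cofinal E2 E1 -> is_lub E1 l -> is_lub E2 l.
Proof.
move=> E12 E21 [l_ub l_least]; split=> [t E2t|u u_ub].
  by have [t' E1t' le_tt'] := E21 t E2t; move: (l_ub t' E1t'); lra.
apply: l_least => t E1t; have [t' E2t' le_tt'] := E12 t E1t.
by move: (u_ub t' E2t'); lra.
Qed.

Lemma ERsup_cofinal E1 E2 : cofinal E1 E2 -> cofinal E2 E1 -> ERsup E1 = ERsup E2.
Proof.
move=> E12 E21; rewrite /ERsup.
case: (excluded_middle_informative (exists l, is_lub E1 l)) => [lub1|no_lub1];
case: (excluded_middle_informative (exists l, is_lub E2 l)) => [lub2|no_lub2].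
- case: (constructive_indefinite_description _ lub1) => l1 l1_lub.
  case: (constructive_indefinite_description _ lub2) => l2 l2_lub /=.
  by rewrite (is_lub_u _ _ _ (is_lub_cofinal E12 E21 l1_lub) l2_lub).
- by case: no_lub2; case: lub1 => l /(is_lub_cofinal E12 E21); exists l.
- by case: no_lub1; case: lub2 => l /(is_lub_cofinal E21 E12); exists l.
- case: (excluded_middle_informative (exists x, E1 x)) => [[x E1x]|no1];
  case: (excluded_middle_informative (exists x, E2 x)) => [[y E2y]|no2] //.
    by case: no2; have [t E2t _] := E12 x E1x; exists t.
  by case: no1; have [t E1t _] := E21 y E2y; exists t.
Qed.

Lemma ERsup_Fin E q : ERsup E = Fin q -> is_lub E q.
Proof.
rewrite /ERsup; case: (excluded_middle_informative (exists l, is_lub E l)) => [lub|_].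
  by case: (constructive_indefinite_description _ lub) => l l_lub [<-].
by case: (excluded_middle_informative (exists x, E x)).
Qed.

Lemma ERsup_bounded E : (exists x, E x) -> bound E -> exists q, ERsup E = Fin q.
Proof.
move=> E_ne E_bd; rewrite /ERsup.
case: (excluded_middle_informative (exists l, is_lub E l)) => [lub|[]].
  by eexists.
by have [l l_lub] := completeness E E_bd E_ne; exists l.
Qed.

Lemma ERsup_neq_MInf E : (exists x, E x) -> ERsup E <> MInf.
Proof.
move=> E_ne; rewrite /ERsup.
case: (excluded_middle_informative (exists l, is_lub E l)) => [lub|_].
  by case: (constructive_indefinite_description _ lub).
by case: (excluded_middle_informative (exists x, E x)).
Qed.

Lemma ERle_trans a b c : ERle a b -> ERle b c -> ERle a c.
Proof. by case: a; case: b; case: c => //= *; lra. Qed.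

Lemma ERdiv_add_le h rho t1 t2 : t1 <= t2 ->
  ERle (ERdiv_add h rho t1) (ERdiv_add h rho t2).
Proof. by case: h => //= r; lra. Qed.

End ExtendedSup.

Section QuadraticEnvelope.
Local Open Scope R_scope.

Variables (T : Type) (dom : T -> Prop) (d2 : T -> T -> R) (gamma : R) (g : T -> ERbar).
Hypothesis gamma_gt0 : 0 < gamma.
Hypothesis d2_ge0 : forall x y, 0 <= d2 x y.
Hypothesis g_ge0 : forall z, ERle (Fin 0) (g z).

Definition minorant_values (x : T) (t : R) := exists (alpha : R) (y : T),
  dom y /\ (forall z, dom z -> ERle (Fin (alpha - gamma / 2 * d2 z y)) (g z)) /\
  t = alpha - gamma / 2 * d2 x y.

Local Notation Q := (Qenv dom d2 gamma g).

Lemma QenvE x : Q x = ERsup (minorant_values x).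
Proof. by []. Qed.

Lemma minorant_values_ne y0 x : dom y0 -> exists t, minorant_values x t.
Proof.
move=> y0_dom; exists (0 - gamma / 2 * d2 x y0), 0, y0; do 2!split => //.
move=> z _; apply: ERle_trans (g_ge0 z) => /=.
have := Rmult_le_pos (gamma / 2) _ (ltac:(lra)) (d2_ge0 z y0); lra.
Qed.

Lemma minorant_values_le x r : dom x -> g x = Fin r ->
  forall t, minorant_values x t -> t <= r.
Proof. by move=> x_dom gx t [alpha [y [_ [minor ->]]]]; move: (minor x x_dom); rewrite gx. Qed.

Lemma Qenv_fin u : dom u -> g u <> PInf -> exists q, Q u = Fin q.
Proof.
move=> u_dom; case gu: (g u) => [r||] // _; last by move: (g_ge0 u); rewrite gu.
apply: ERsup_bounded; first exact: minorant_values_ne u u_dom.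
by exists r; apply: minorant_values_le.
Qed.

Lemma prox_Qenv_fin rho w v u : dom u -> g u <> PInf ->
  is_prox dom d2 Q rho w v -> exists q, Q v = Fin q.
Proof.
move=> u_dom gu [v_dom v_min]; have [qu Qu] := Qenv_fin u_dom gu.
have := v_min u u_dom; rewrite Qu.
have := ERsup_neq_MInf (minorant_values_ne v v_dom); rewrite -QenvE.
by case: (Q v) => // q _ _; exists q.
Qed.

Variable mid : T -> T -> T.
Hypothesis mid_dom : forall x x', dom x -> dom x' -> dom (mid x x').
Hypothesis d2_mid : forall x x' y,
  d2 (mid x x') y = / 2 * d2 x y + / 2 * d2 x' y - / 4 * d2 x x'.
Hypothesis d2_eq0 : forall x y, d2 x y = 0 -> x = y.

(* By [d2_mid] each minorant [alpha - gamma/2 d2 . y] satisfies this midpoint bound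
   with equality, and the bound passes to the supremum. *)
Lemma Qenv_mid_le x1 x2 q1 q2 : dom x1 -> dom x2 -> Q x1 = Fin q1 -> Q x2 = Fin q2 ->
  exists2 qm, Q (mid x1 x2) = Fin qm &
    qm <= / 2 * q1 + / 2 * q2 + gamma / 8 * d2 x1 x2.
Proof.
move=> x1_dom x2_dom /ERsup_Fin [q1_ub _] /ERsup_Fin [q2_ub _].
have mid_le t : minorant_values (mid x1 x2) t ->
    t <= / 2 * q1 + / 2 * q2 + gamma / 8 * d2 x1 x2.
  move=> [alpha [y [y_dom [minor ->]]]].
  have mv x : minorant_values x (alpha - gamma / 2 * d2 x y) by exists alpha, y.
  by move: (q1_ub _ (mv x1)) (q2_ub _ (mv x2)); rewrite d2_mid; lra.
have [qm Qm] : exists qm, Q (mid x1 x2) = Fin qm.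
  apply: ERsup_bounded; first exact: minorant_values_ne _ x1_dom.
  by eexists; exact: mid_le.
by exists qm => //; have [_] := ERsup_Fin Qm; apply.
Qed.

Lemma prox_unique rho w v1 v2 u : gamma < rho -> dom u -> g u <> PInf ->
  is_prox dom d2 Q rho w v1 -> is_prox dom d2 Q rho w v2 -> v1 = v2.
Proof.
move=> lt_gamma_rho u_dom gu v1_prox v2_prox.
have [q1 Q1] := prox_Qenv_fin u_dom gu v1_prox.
have [q2 Q2] := prox_Qenv_fin u_dom gu v2_prox.
case: v1_prox v2_prox => [v1_dom v1_min] [v2_dom v2_min].
have [qm Qm qm_le] := Qenv_mid_le v1_dom v2_dom Q1 Q2.
have := v1_min _ (mid_dom v1_dom v2_dom); have := v2_min _ (mid_dom v1_dom v2_dom).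
rewrite Q1 Q2 Qm /= !d2_mid /Rdiv => le2 le1.
(* Adding the two prox inequalities at the midpoint leaves
   (1 - gamma / rho) d2 v1 v2 <= 0. *)
apply: d2_eq0; apply: Rle_antisym (d2_ge0 v1 v2).
have rho_gt0 : 0 < / rho by apply: Rinv_0_lt_compat; lra.
have gamma_rho : gamma * / rho < 1.
  by apply: (Rmult_lt_reg_r rho); [lra | rewrite Rmult_assoc Rinv_l; lra].
have := Rmult_le_compat_r _ _ _ (Rlt_le _ _ rho_gt0) qm_le.
have := d2_ge0 v1 v2; nra.
Qed.

End QuadraticEnvelope.

Section Midpoint.
Local Open Scope R_scope.

Variable N : nat.
Implicit Types (X Y Z : mat N).

Definition midm X Y : mat N := fun i j =>
  mkC ((Cre (X i j) + Cre (Y i j)) / 2) ((Cim (X i j) + Cim (Y i j)) / 2).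

Lemma midm_hermitian X Y : hermitian X -> hermitian Y -> hermitian (midm X Y).
Proof. by move=> X_herm Y_herm i j; rewrite /midm X_herm Y_herm /Cconj /=; f_equal; field. Qed.

Lemma sumI_lin (G H K : 'I_N -> R) c1 c2 c3 :
  sumI (fun i => c1 * G i + c2 * H i - c3 * K i) = c1 * sumI G + c2 * sumI H - c3 * sumI K.
Proof. by rewrite /sumI; elim: (enum 'I_N) => [|x r IH] /=; [ring | rewrite IH; ring]. Qed.

Lemma fdist2_midm X Y Z :
  fdist2 (midm X Y) Z = / 2 * fdist2 X Z + / 2 * fdist2 Y Z - / 4 * fdist2 X Y.
Proof.
rewrite /fdist2 -sumI_lin; congr sumI; apply: functional_extensionality => i.
rewrite -sumI_lin; congr sumI; apply: functional_extensionality => j.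
by rewrite /midm /Cnorm2 /Csub /=; field.
Qed.

End Midpoint.

Section SpectralEnvelope.
Local Open Scope R_scope.

Variables (N : nat) (f : vecR N -> ERbar) (gamma : R).
Hypothesis f_ge0 : forall x, ERle (Fin 0) (f x).
Hypothesis f_sym : forall (s : {perm 'I_N}) (x : vecR N), f (fun i => x (s i)) = f x.
Hypothesis gamma_gt0 : 0 < gamma.
Implicit Types (U V W X Y Z : mat N) (a p y z : vecR N).

Local Notation F := (fun X : mat N => f (lambda X)).

Lemma f_lambda_conj_diagm W z : unitary W -> f (lambda (conj_diagm W z)) = f z.
Proof. by move=> W_unitary; have [s ->] := lambda_conj_diagm z W_unitary; apply: f_sym. Qed.

Lemma sub_gamma_half_le c t1 t2 : t1 <= t2 -> c - gamma / 2 * t2 <= c - gamma / 2 * t1.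
Proof. by move=> le_t; have := Rmult_le_compat_l (gamma / 2) _ _ ltac:(lra) le_t; lra. Qed.

Lemma vec_minorant_perm alpha y (s : {perm 'I_N}) :
  (forall z, ERle (Fin (alpha - gamma / 2 * vdist2 z y)) (f z)) ->
  forall z, ERle (Fin (alpha - gamma / 2 * vdist2 z (fun i => y (s i)))) (f z).
Proof. by move=> minor z; rewrite vdist2_permr -(f_sym (s^-1)%g z); apply: minor. Qed.

Lemma Qvec_perm (s : {perm 'I_N}) x : Qvec gamma f (fun i => x (s i)) = Qvec gamma f x.
Proof.
have cof (t : {perm 'I_N}) y :
    cofinal (minorant_values (fun _ => True) (@vdist2 N) gamma f (fun i => y (t i)))
            (minorant_values (fun _ => True) (@vdist2 N) gamma f y).
  move=> _ [alpha [z [_ [minor ->]]]].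
  exists (alpha - gamma / 2 * vdist2 (fun i => y (t i)) z); last exact: Rle_refl.
  exists alpha, (fun i => z ((t^-1)%g i)); do 2!split => //.
    by move=> w _; apply: vec_minorant_perm => w'; apply: minor.
  by rewrite vdist2_permr invgK.
rewrite /Qvec !QenvE; apply: ERsup_cofinal; first exact: cof.
have x_perm : x = fun i => (fun j => x (s j)) ((s^-1)%g i).
  by apply: functional_extensionality => i; rewrite permKV.
by rewrite {1}x_perm; apply: cof.
Qed.

Lemma Qmat_spectral X : hermitian X -> Qmat gamma F X = Qvec gamma f (lambda X).
Proof.
move=> X_herm; rewrite /Qmat /Qvec !QenvE; apply: ERsup_cofinal.
  move=> _ [alpha [Y [Y_herm [minor ->]]]].
  exists (alpha - gamma / 2 * vdist2 (lambda X) (lambda Y)).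
    exists alpha, (lambda Y); split => //; split => // z _.
    have [_ [W [W_unitary YW]]] := lambda_eigvals Y_herm.
    have := minor _ (conj_diagm_hermitian W z).
    by rewrite f_lambda_conj_diagm // {1}YW -/(conj_diagm W _) fdist2_conj_diagm.
  exact/sub_gamma_half_le/vdist2_lambda_le.
move=> _ [alpha [y [_ [minor ->]]]].
have [s /nonincreasingE ys_noninc] := exists_sorting_perm y.
have [lX_noninc [U [U_unitary XU]]] := lambda_eigvals X_herm.
exists (alpha - gamma / 2 * fdist2 X (conj_diagm U (fun i => y (s i)))).
  exists alpha, (conj_diagm U (fun i => y (s i))).
  split; first exact: conj_diagm_hermitian.
  split => // Z Z_herm.
  apply: ERle_trans (vec_minorant_perm s (fun z => minor z I) (lambda Z)) => /=.
  apply: sub_gamma_half_le.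
  have [lZ_noninc [V [V_unitary ZV]]] := lambda_eigvals Z_herm.
  have := vdist2_le_fdist2 V_unitary U_unitary lZ_noninc ys_noninc.
  by rewrite /conj_diagm -ZV.
apply: sub_gamma_half_le.
rewrite {1}XU -/(conj_diagm U _) fdist2_conj_diagm //.
exact: vdist2_sorted_le.
Qed.

Lemma Qmat_conj_diagm W z : unitary W -> Qmat gamma F (conj_diagm W z) = Qvec gamma f z.
Proof.
move=> W_unitary; rewrite Qmat_spectral; last exact: conj_diagm_hermitian.
by have [s ->] := lambda_conj_diagm z W_unitary; apply: Qvec_perm.
Qed.

Lemma fdist2_conj_diagm_spectral U a X : unitary U -> X = conj_diagm U (lambda X) ->
  fdist2 (conj_diagm U a) X = vdist2 a (lambda X).
Proof. by move=> U_unitary XU; rewrite {1}XU fdist2_conj_diagm. Qed.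

Lemma prox_vec_to_mat rho X U p : hermitian X -> unitary U ->
  X = conj_diagm U (lambda X) ->
  prox_vec (Qvec gamma f) rho (lambda X) p ->
  prox_mat (Qmat gamma F) rho X (conj_diagm U p).
Proof.
move=> X_herm U_unitary XU [_ p_min]; split=> [|Z Z_herm].
  exact: conj_diagm_hermitian.
rewrite Qmat_conj_diagm // fdist2_conj_diagm_spectral // Qmat_spectral //.
apply: ERle_trans (p_min (lambda Z) I) _.
by apply: ERdiv_add_le; have := vdist2_lambda_le Z_herm X_herm; lra.
Qed.

Lemma prox_mat_spectral_inv rho X U V : (exists x, f x <> PInf) -> gamma < rho ->
  hermitian X -> unitary U -> X = conj_diagm U (lambda X) ->
  prox_mat (Qmat gamma F) rho X V ->
  V = conj_diagm U (lambda V) /\ prox_vec (Qvec gamma f) rho (lambda X) (lambda V).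
Proof.
move=> [x0 fx0] lt_gamma_rho X_herm U_unitary XU [V_herm V_min].
have V'_prox : prox_mat (Qmat gamma F) rho X (conj_diagm U (lambda V)).
  split=> [|Z Z_herm]; first exact: conj_diagm_hermitian.
  apply: ERle_trans (V_min Z Z_herm).
  rewrite Qmat_conj_diagm // Qmat_spectral // fdist2_conj_diagm_spectral //.
  by apply: ERdiv_add_le; have := vdist2_lambda_le V_herm X_herm; lra.
have F_fin : F (conj_diagm (@idm N) x0) <> PInf.
  by rewrite /= f_lambda_conj_diagm //; exact: unitary_idm.
split.
  exact: (prox_unique gamma_gt0 (@fdist2_ge0 N) (fun Z => f_ge0 (lambda Z))
    (@midm_hermitian N) (@fdist2_midm N) (@fdist2_eq0 N) lt_gamma_rho
    (conj_diagm_hermitian _ _) F_fin (conj V_herm V_min) V'_prox).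
split=> // z _.
rewrite -(Qmat_conj_diagm (lambda V) U_unitary) -(Qmat_conj_diagm z U_unitary).
rewrite -!(fdist2_conj_diagm_spectral _ U_unitary XU).
exact: (proj2 V'_prox) _ (conj_diagm_hermitian U z).
Qed.

End SpectralEnvelope.

Local Open Scope R_scope.

Theorem proposition1 (N : nat) (f : vecR N -> ERbar) (gamma : R)
  (f_nonneg : forall x, ERle (Fin 0) (f x))
  (f_sym : forall (s : {perm 'I_N}) (x : vecR N), f (fun i => x (s i)) = f x)
  (gamma_pos : 0 < gamma) :
  let F : mat N -> ERbar := fun X => f (lambda X) in
  (forall X : mat N, hermitian X ->
      Qmat gamma F X = Qvec gamma f (lambda X)) /\
  ((exists x, f x <> PInf) ->
   forall rho : R, gamma < rho ->
   forall X U : mat N, hermitian X -> unitary U ->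
     X = mmul (mmul U (diagm (lambda X))) (adj U) ->
     forall V : mat N,
       prox_mat (Qmat gamma F) rho X V <->
       exists p : vecR N,
         prox_vec (Qvec gamma f) rho (lambda X) p /\
         V = mmul (mmul U (diagm p)) (adj U)).
Proof.
move=> F; split=> [X X_herm|f_fin rho lt_gamma_rho X U X_herm U_unitary XU V].
  exact: Qmat_spectral.
split=> [V_prox|[p [p_prox ->]]]; last exact: prox_vec_to_mat.
have [VE Vq_prox] := prox_mat_spectral_inv f_nonneg f_sym gamma_pos f_fin lt_gamma_rho
  X_herm U_unitary XU V_prox.
by exists (lambda V).
Qed.
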